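(* Let $N\ge1$, $1\le a\le N$ and $p\ge0$ be integers. For integers $q_1,\dots,q_N$ set $C_2(q_1,\dots,q_N)=\sum_{j=1}^N s_j(s_j-2j)$ with $s_j=q_j-\frac1N\sum_{k=1}^N q_k$. Then for all integers $p_1\ge p_2\ge\dots\ge p_a\ge0$ with $\sum_{i=1}^a p_i=ap$, $$C_2(p_1,\dots,p_a,0,\dots,0)-C_2(\underbrace{p,\dots,p}_{a},0,\dots,0)\ge0,$$ with equality if and only if $p_i=p$ for all $i=1,\dots,a$.
   Context: Here $(p_1,\dots,p_a,0,\dots,0)$ and $(p,\dots,p,0,\dots,0)$ denote $N$-tuples padded with zeros. *)

From mathcomp Require Import all_boot all_order all_algebra.
Set Implicit Arguments. Unset Strict Implicit. Unset Printing Implicit Defensive.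
Import Order.TTheory GRing.Theory Num.Theory.
Local Open Scope ring_scope.

(* Index j in 1..N is represented by i : 'I_N with j = i + 1. *)
Definition C2 (N : nat) (q : 'I_N -> int) : rat :=
  let mean := (\sum_(k < N) (q k)%:~R) / N%:R in
  \sum_(j < N) (((q j)%:~R - mean) * (((q j)%:~R - mean) - 2 * (j.+1)%:R)).

(* (p_1,...,p_a,0,...,0) as an N-tuple; pp i is p_{i+1} *)
Arguments C2 : clear implicits.
Definition padZ (N a : nat) (pp : nat -> int) : 'I_N -> int :=
  fun i => if (i < a)%N then pp i else 0.
Arguments padZ : clear implicits.

From mathcomp Require Import all_boot all_order all_algebra.
From mathcomp Require Import ring lra.
Set Implicit Arguments. Unset Strict Implicit. Unset Printing Implicit Defensive.
Import Order.TTheory Order.NatMonotonyTheory GRing.Theory Num.Theory.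
Local Open Scope ring_scope.

(* With d_i = p_i - p we have sum_i d_i = 0, so both tuples have the same mean
   and the difference of the C2 values collapses to
   sum_i d_i^2 - 2 sum_i i d_i.  Since i increases while d_i decreases,
   Chebyshev's sum inequality gives a * sum_i i d_i <= (sum_i i) (sum_i d_i) = 0,
   so the difference is at least sum_i d_i^2 >= 0, and it vanishes only if
   every d_i is 0. *)

Lemma chebyshev_sum (R : numDomainType) n (x y : 'I_n -> R) :
  (forall i j : 'I_n, (i <= j)%N -> x i <= x j) ->
  (forall i j : 'I_n, (i <= j)%N -> y j <= y i) ->
  n%:R * \sum_(i < n) x i * y i <= (\sum_(i < n) x i) * \sum_(i < n) y i.
Proof.
move=> x_nondec y_noninc.
have pair_le0 : \sum_(i < n) \sum_(j < n) (x i - x j) * (y i - y j) <= 0.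
  apply: sumr_le0 => i _; apply: sumr_le0 => j _.
  have [le_ij | /ltnW le_ji] := leqP i j.
    by rewrite mulr_le0_ge0 ?subr_le0 ?subr_ge0 ?x_nondec ?y_noninc.
  by rewrite mulr_ge0_le0 ?subr_le0 ?subr_ge0 ?x_nondec ?y_noninc.
have pair_sumE : \sum_(i < n) \sum_(j < n) (x i - x j) * (y i - y j) =
    2 * (n%:R * \sum_(i < n) x i * y i - (\sum_(i < n) x i) * \sum_(i < n) y i).
  under eq_bigr => i _.
    rewrite (eq_bigr (fun j => x i * y i - x i * y j - (x j * y i - x j * y j)));
      last by move=> j _; ring.
    rewrite !sumrB sumr_const card_ord -mulr_sumr -mulr_suml.
  over.
  rewrite !sumrB sumr_const card_ord sumrMnl -!mulr_suml -mulr_sumr -mulr_natr; ring.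
by move: pair_le0; rewrite pair_sumE pmulr_rle0 // subr_le0; apply.
Qed.

Lemma sum_natr_mul_noninc_le0 (R : numDomainType) n (y : 'I_n -> R) :
  (forall i j : 'I_n, (i <= j)%N -> y j <= y i) -> \sum_(i < n) y i = 0 ->
  \sum_(i < n) i%:R * y i <= 0.
Proof.
case: n y => [|n] y y_noninc sum_y0; first by rewrite big_ord0.
rewrite -(pmulr_rle0 _ (ltr0Sn R n)).
apply: le_trans (chebyshev_sum _ y_noninc) _; last by rewrite sum_y0 mulr0.
by move=> i j; rewrite ler_nat.
Qed.

Lemma nonincn_ord (d : Order.disp_t) (T : preorderType d) a (f : nat -> T) :
  (forall i, (i.+1 < a)%N -> (f i.+1 <= f i)%O) ->
  forall i j : 'I_a, (i <= j)%N -> (f j <= f i)%O.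
Proof.
move=> f_step i j; apply: (nonincn_inP (D := [pred k | (k < a)%N])); rewrite ?inE ?ltn_ord //.
- move=> k l _; rewrite !inE => lt_la m; rewrite ltEnat => /andP[_ lt_ml].
  exact: ltn_trans lt_ml lt_la.
- by move=> k _ /f_step.
Qed.

Lemma C2_sub N (u v : 'I_N -> int) :
  \sum_(k < N) u k = \sum_(k < N) v k ->
  C2 N u - C2 N v = \sum_(j < N) (((u j)%:~R : rat) ^+ 2 - (v j)%:~R ^+ 2
                                  - 2 * (j.+1)%:R * ((u j)%:~R - (v j)%:~R)).
Proof.
move=> sum_uv.
have sum_uvR : \sum_(k < N) ((u k)%:~R : rat) = \sum_(k < N) (v k)%:~R.
  by rewrite -!rmorph_sum sum_uv.
rewrite /C2 /=; set mu := (\sum_(k < N) _) / _; set mv := (\sum_(k < N) _) / _.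
have {mv}-> : mv = mu by rewrite /mu /mv sum_uvR.
rewrite -sumrB (eq_bigr (fun j => (((u j)%:~R : rat) ^+ 2 - (v j)%:~R ^+ 2
    - 2 * (j.+1)%:R * ((u j)%:~R - (v j)%:~R)) - 2 * mu * ((u j)%:~R - (v j)%:~R))); last first.
  by move=> j _; ring.
by rewrite sumrB -mulr_sumr [X in _ * X]sumrB sum_uvR subrr mulr0 subr0.
Qed.

Lemma sum_padZ2 (R : nmodType) (G : nat -> int -> int -> R) N a (pp qq : nat -> int) :
  (a <= N)%N -> (forall i, G i 0 0 = 0) ->
  \sum_(j < N) G j (padZ N a pp j) (padZ N a qq j) = \sum_(i < a) G i (pp i) (qq i).
Proof.
move=> le_aN G00.
rewrite (big_ord_widen _ (fun i => G i (pp i) (qq i)) le_aN) [RHS]big_mkcond /=.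
by apply: eq_bigr => j _; rewrite /padZ; case: ifP.
Qed.

Lemma sum_deviation_eq0 a (pp : nat -> int) (p : int) :
  \sum_(i < a) pp i = a%:Z * p -> \sum_(i < a) ((pp i - p)%:~R : rat) = 0.
Proof.
move=> sum_pp.
by rewrite -rmorph_sum sumrB sum_pp sumr_const card_ord -natz mulr_natl subrr rmorph0.
Qed.

Lemma C2_padZ_sub_const N a (pp : nat -> int) (p : int) :
  (a <= N)%N -> \sum_(i < a) pp i = a%:Z * p ->
  C2 N (padZ N a pp) - C2 N (padZ N a (fun=> p)) =
  \sum_(i < a) ((pp i - p)%:~R : rat) ^+ 2 - 2 * \sum_(i < a) i%:R * (pp i - p)%:~R.
Proof.
move=> le_aN sum_pp.
rewrite C2_sub; last first.
  rewrite (sum_padZ2 (G := fun _ x _ => x)) // (sum_padZ2 (G := fun _ _ y => y)) //.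
  by rewrite sum_pp sumr_const card_ord -natz mulr_natl.
rewrite (sum_padZ2 (G := fun j (x y : int) => (x%:~R : rat) ^+ 2 - y%:~R ^+ 2
                                        - 2 * j.+1%:R * (x%:~R - y%:~R))) //; last first.
  by move=> i; rewrite subrr mulr0 subrr.
rewrite (eq_bigr (fun i : 'I_a => ((pp i - p)%:~R : rat) ^+ 2 - 2 * (i%:R * (pp i - p)%:~R)
                                 + 2 * (p%:~R - 1) * (pp i - p)%:~R)); last first.
  by move=> i _; rewrite rmorphB /= -addn1 natrD; ring.
by rewrite big_split /= sumrB -!mulr_sumr (sum_deviation_eq0 sum_pp) mulr0 addr0.
Qed.

Theorem mainTheorem6 (N a : nat) (p : int) (pp : nat -> int) :
  (1 <= N)%N -> (1 <= a)%N -> (a <= N)%N -> 0 <= p ->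
  (forall i, (i.+1 < a)%N -> pp i.+1 <= pp i) ->
  (forall i, (i < a)%N -> 0 <= pp i) ->
  (\sum_(i < a) pp i) = (a%:Z * p) ->
  0 <= C2 N (padZ N a pp) - C2 N (padZ N a (fun _ => p)) /\
  (C2 N (padZ N a pp) - C2 N (padZ N a (fun _ => p)) = 0 <->
     forall i, (i < a)%N -> pp i = p).
Proof.
move=> _ _ le_aN _ pp_step _ sum_pp.
rewrite C2_padZ_sub_const //.
have cross_le0 : \sum_(i < a) i%:R * ((pp i - p)%:~R : rat) <= 0.
  apply: sum_natr_mul_noninc_le0 (sum_deviation_eq0 sum_pp) => i j le_ij.
  by rewrite ler_int lerD2r (nonincn_ord pp_step).
have sq_ge0 : 0 <= \sum_(i < a) ((pp i - p)%:~R : rat) ^+ 2.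
  by apply: sumr_ge0 => i _; apply: sqr_ge0.
split; first lra.
split => [diff0 i lt_ia | pp_eq_p]; last first.
  by rewrite !big1 ?mulr0 ?subr0 // => i _; rewrite pp_eq_p // subrr ?mulr0.
have sq0 : \sum_(i < a) ((pp i - p)%:~R : rat) ^+ 2 = 0 by lra.
have /(_ (Ordinal lt_ia) isT)/eqP :=
  psumr_eq0P (fun (j : 'I_a) _ => sqr_ge0 ((pp j - p)%:~R : rat)) sq0.
by rewrite sqrf_eq0 intr_eq0 subr_eq0 => /eqP.
Qed.
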